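(* Let $\mathcal D$ be universal, $\mathrm M=(M,d)\in\mathfrak U_{\mathcal D}$, $A\subseteq M$ finite, $s\in\mathbb N$, and for each $i\in\{0,\dots,s-1\}$ let $\mathfrak t_i$ be a Katětov function of $\mathrm M$ with domain $A$ (not necessarily distinct). Let $d''$ be a metric on the index set $\{0,\dots,s-1\}$ with $d''(i,j)\in d(\mathfrak t_i,\mathfrak t_j)$ for all $i,j$. Define $d'$ on the disjoint union $A\sqcup\{0,\dots,s-1\}$ by $d'(x,y)=d(x,y)$ for $x,y\in A$, $d'(i,j)=d''(i,j)$, and $d'(x,i)=d'(i,x)=\mathfrak t_i(x)$ for $x\in A$. Then $d'$ is a metric, and for every $C\subseteq\{0,\dots,s-1\}$, every isometric embedding $\beta$ of $(A\cup C,d')$ into $\mathrm M$ with $\beta(x)=x$ for all $x\in A$ extends to an isometric embedding $\alpha$ of $(A\cup\{0,\dots,s-1\},d')$ into $\mathrm M$ with $\alpha(i)\in\operatorname{orb}(\mathfrak t_i)$ for all $i$.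
   Context: $\mathcal D$ is a finite subset of $\mathbb R_{\ge0}$ containing $0$. $\mathfrak U_{\mathcal D}$ is the class of countable homogeneous metric spaces (every isometry between finite subspaces extends to an isometry of the space onto itself) with distance set exactly $\mathcal D$ into which every finite metric space with distances in $\mathcal D$ embeds isometrically; $\mathcal D$ is universal if this class is nonempty. A Katětov function of $\mathrm M$ is a map $\mathfrak t:F\to\mathcal D\setminus\{0\}$, $F\subseteq M$ finite, with $|\mathfrak t(x)-\mathfrak t(y)|\le d(x,y)\le\mathfrak t(x)+\mathfrak t(y)$ for all $x,y\in F$; $\operatorname{orb}(\mathfrak t)=\{y\in M\setminus F: d(y,x)=\mathfrak t(x)\ \forall x\in F\}$. $d(\mathfrak s,\mathfrak t)=\{d(x,y):x\in\operatorname{orb}(\mathfrak s),y\in\operatorname{orb}(\mathfrak t)\}$. *)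

From Stdlib Require Export Reals List.
Export ListNotations.
Open Scope R_scope.

Definition is_metric {X : Type} (P : X -> Prop) (e : X -> X -> R) : Prop :=
  (forall x y, P x -> P y -> (e x y = 0 <-> x = y)) /\
  (forall x y, P x -> P y -> e x y = e y x) /\
  (forall x y z, P x -> P y -> P z -> e x z <= e x y + e y z).

Definition countable_type (M : Type) : Prop :=
  exists f : M -> nat, forall x y, f x = f y -> x = y.

(* every isometry between finite subspaces (domain given by the finite list l,
   the map by g restricted to l) extends to an isometry of M onto itself *)
Definition homogeneous {M : Type} (d : M -> M -> R) : Prop :=
  forall (l : list M) (g : M -> M),
    (forall x y, In x l -> In y l -> d (g x) (g y) = d x y) ->
    exists h : M -> M,
      (forall x y, d (h x) (h y) = d x y) /\
      (forall y, exists x, h x = y) /\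
      (forall x, In x l -> h x = g x).

Definition distance_set_is {M : Type} (d : M -> M -> R) (D : list R) : Prop :=
  forall r, In r D <-> exists x y, d x y = r.

Definition embeds_all_finite {M : Type} (d : M -> M -> R) (D : list R) : Prop :=
  forall (n : nat) (e : nat -> nat -> R),
    is_metric (fun i => (i < n)%nat) e ->
    (forall i j, (i < n)%nat -> (j < n)%nat -> In (e i j) D) ->
    exists f : nat -> M,
      forall i j, (i < n)%nat -> (j < n)%nat -> d (f i) (f j) = e i j.

Definition in_UD (D : list R) (M : Type) (d : M -> M -> R) : Prop :=
  is_metric (fun _ => True) d /\ countable_type M /\ homogeneous d /\
  distance_set_is d D /\ embeds_all_finite d D.

Definition universal (D : list R) : Prop :=
  exists (M : Type) (d : M -> M -> R), in_UD D M d.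

(* t is a Katetov function of M with domain A (values outside A irrelevant) *)
Definition katetov (D : list R) {M : Type} (d : M -> M -> R) (A : list M)
  (t : M -> R) : Prop :=
  (forall x, In x A -> In (t x) D /\ t x <> 0) /\
  (forall x y, In x A -> In y A -> Rabs (t x - t y) <= d x y /\ d x y <= t x + t y).

Definition orb {M : Type} (d : M -> M -> R) (A : list M) (t : M -> R) (y : M) : Prop :=
  ~ In y A /\ forall x, In x A -> d y x = t x.

Definition in_dist_set {M : Type} (d : M -> M -> R) (A : list M)
  (s t : M -> R) (r : R) : Prop :=
  exists x y, orb d A s x /\ orb d A t y /\ d x y = r.

(* the metric d' on A ⊔ {0..s-1}, represented in M + nat *)
Definition dprime {M : Type} (d : M -> M -> R) (d'' : nat -> nat -> R)
  (t : nat -> M -> R) (p q : M + nat) : R :=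
  match p, q with
  | inl x, inl y => d x y
  | inr i, inr j => d'' i j
  | inl x, inr i => t i x
  | inr i, inl x => t i x
  end.

Definition in_dom {M : Type} (A : list M) (C : nat -> Prop) (p : M + nat) : Prop :=
  match p with
  | inl x => In x A
  | inr i => C i
  end.

From Stdlib Require Import Lra Lia ClassicalEpsilon.

(* The space A ⊔ {0..s-1} with d' is a finite metric space with distances in D
   (the triangle inequalities are the Katětov conditions and, for two indices,
   the triangle inequalities through witnesses of d''(i,j) in d(t_i,t_j)), so by
   universality it embeds isometrically into M.  Composing with the inverse of
   this embedding on A ∪ C, the map β becomes an isometry between finite
   subspaces of M; homogeneity extends it to an isometry h of M, and h composed
   with the embedding is α.  Since α fixes A, α(i) realizes t_i over A. *)

Lemma listing_bounded (C : nat -> Prop) (s : nat) :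
  (forall i, C i -> (i < s)%nat) -> exists l, forall i, C i <-> In i l.
Proof.
  intro HC.
  exists (filter (fun i => if excluded_middle_informative (C i) then true else false)
            (seq 0 s)).
  intro i; rewrite filter_In, in_seq.
  destruct (excluded_middle_informative (C i)) as [Hi|Hi]; split.
  - intro H; specialize (HC i H); split; [lia | reflexivity].
  - tauto.
  - tauto.
  - intros [_ H]; discriminate.
Qed.

Lemma in_dom_listing {M : Type} (A : list M) (C : nat -> Prop) (lC : list nat) :
  (forall i, C i <-> In i lC) ->
  forall p, in_dom A C p <-> In p (map inl A ++ map inr lC).
Proof.
  intros HC [x|i]; simpl; rewrite in_app_iff, !in_map_iff; split.
  - intro Hx; left; exists x; auto.
  - intros [[y [Hy Hy']]|[j [Hj _]]]; [injection Hy as ->; exact Hy' | discriminate].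
  - intro Hi; right; exists i; split; [reflexivity | apply HC, Hi].
  - intros [[y [Hy _]]|[j [Hj Hj']]]; [discriminate | injection Hj as ->; apply HC, Hj'].
Qed.

Lemma in_dom_mono {M : Type} (A : list M) (C C' : nat -> Prop) :
  (forall i, C i -> C' i) -> forall p, in_dom A C p -> in_dom A C' p.
Proof. intros HC [x|i]; simpl; auto. Qed.

(* Reindexing a finite metric space by the positions of a duplicate-free list
   of its points. *)
Lemma embeds_listed {M : Type} (d : M -> M -> R) (D : list R)
  (Hemb : embeds_all_finite d D)
  {X : Type} (P : X -> Prop) (l : list X) (Hl : forall p, P p <-> In p l)
  (e : X -> X -> R) (He : is_metric P e)
  (HeD : forall p q, P p -> P q -> In (e p q) D) :
  exists f : X -> M, forall p q, P p -> P q -> d (f p) (f q) = e p q.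
Proof.
  set (L := nodup (fun x y => excluded_middle_informative (x = y)) l).
  assert (HL : NoDup L) by apply NoDup_nodup.
  assert (HPL : forall p, P p <-> In p L)
    by (intro p; rewrite Hl; symmetry; apply nodup_In).
  assert (Hnth : forall i, (i < length L)%nat ->
            exists p, nth_error L i = Some p /\ P p).
  { intros i Hi. destruct (nth_error L i) as [p|] eqn:Ei.
    - exists p; split; [reflexivity | apply HPL; eapply nth_error_In; eauto].
    - apply nth_error_Some in Hi; contradiction. }
  set (e' := fun i j => match nth_error L i, nth_error L j with
                        | Some p, Some q => e p q
                        | _, _ => 0 end).
  destruct He as [He0 [Hesym Hetri]].
  destruct (Hemb (length L) e') as [F HF].
  - split; [|split].
    + intros i j Hi Hj.
      destruct (Hnth i Hi) as [p [Ep Pp]], (Hnth j Hj) as [q [Eq Pq]].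
      unfold e'; rewrite Ep, Eq, He0 by assumption. split.
      * intros <-. apply (proj1 (NoDup_nth_error L) HL); congruence.
      * intros <-; congruence.
    + intros i j Hi Hj.
      destruct (Hnth i Hi) as [p [Ep Pp]], (Hnth j Hj) as [q [Eq Pq]].
      unfold e'; rewrite Ep, Eq; auto.
    + intros i j k Hi Hj Hk.
      destruct (Hnth i Hi) as [p [Ep Pp]], (Hnth j Hj) as [q [Eq Pq]],
        (Hnth k Hk) as [r [Er Pr]].
      unfold e'; rewrite Ep, Eq, Er; auto.
  - intros i j Hi Hj.
    destruct (Hnth i Hi) as [p [Ep Pp]], (Hnth j Hj) as [q [Eq Pq]].
    unfold e'; rewrite Ep, Eq; auto.
  - set (idx := fun p => epsilon (inhabits 0%nat) (fun i => nth_error L i = Some p)).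
    assert (Hidx : forall p, P p ->
              nth_error L (idx p) = Some p /\ (idx p < length L)%nat).
    { intros p Pp.
      assert (Ei : nth_error L (idx p) = Some p).
      { apply (epsilon_spec (inhabits 0%nat) (fun i => nth_error L i = Some p)).
        apply In_nth_error, HPL, Pp. }
      split; [exact Ei | apply nth_error_Some; congruence]. }
    exists (fun p => F (idx p)). intros p q Pp Pq.
    destruct (Hidx p Pp) as [Ep Hp], (Hidx q Pq) as [Eq Hq].
    rewrite HF by assumption. unfold e'; rewrite Ep, Eq; reflexivity.
Qed.

Section Homogeneity.

Variables (M : Type) (d : M -> M -> R).
Hypotheses (Hd : is_metric (fun _ => True) d) (Hhom : homogeneous d).

(* β ∘ E⁻¹ is an isometry between finite subspaces of M; extend it by homogeneity. *)
Lemma homogeneous_extension {X : Type} (P Q : X -> Prop) (lQ : list X)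
  (HlQ : forall p, Q p <-> In p lQ) (HQP : forall p, Q p -> P p)
  (e : X -> X -> R) (He : is_metric P e)
  (E : X -> M) (HE : forall p q, P p -> P q -> d (E p) (E q) = e p q)
  (beta : X -> M) (Hbeta : forall p q, Q p -> Q q -> d (beta p) (beta q) = e p q) :
  exists alpha : X -> M,
    (forall p q, P p -> P q -> d (alpha p) (alpha q) = e p q) /\
    (forall p, Q p -> alpha p = beta p).
Proof.
  assert (E_inj : forall p q, P p -> P q -> E p = E q -> p = q).
  { intros p q Pp Pq Hpq. apply (proj1 He p q Pp Pq).
    rewrite <- HE, Hpq by assumption. apply (proj1 Hd); auto. }
  set (g := fun y => epsilon (inhabits y)
                       (fun z => exists p, Q p /\ E p = y /\ beta p = z)).
  assert (Hg : forall p, Q p -> g (E p) = beta p).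
  { intros p Qp.
    destruct (epsilon_spec (inhabits (E p))
                (fun z => exists p', Q p' /\ E p' = E p /\ beta p' = z))
      as [p' [Qp' [Ep' Hp']]]; [exists (beta p), p; auto |].
    unfold g; rewrite <- Hp'. f_equal. apply E_inj; auto. }
  destruct (Hhom (map E lQ) g) as [h [Hh_iso [_ Hh_ext]]].
  { intros y y' Hy Hy'.
    apply in_map_iff in Hy as [p [<- Hp]]. apply in_map_iff in Hy' as [q [<- Hq]].
    apply HlQ in Hp; apply HlQ in Hq.
    rewrite !Hg, Hbeta, HE by auto; reflexivity. }
  exists (fun p => h (E p)). split.
  - intros p q Pp Pq. rewrite Hh_iso. auto.
  - intros p Qp. rewrite Hh_ext by (apply in_map, HlQ, Qp). auto.
Qed.

End Homogeneity.

Section KatetovExtension.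

Variables (D : list R) (M : Type) (d : M -> M -> R) (A : list M).
Hypothesis Hd : is_metric (fun _ => True) d.

Lemma katetov_bounds (t : M -> R) : katetov D d A t ->
  forall x y, In x A -> In y A -> t x <= d x y + t y /\ d x y <= t x + t y.
Proof.
  intros [_ Ht] x y Hx Hy. destruct (Ht x y Hx Hy) as [H1 H2].
  pose proof (Rle_abs (t x - t y)). split; lra.
Qed.

Lemma dist_set_bounds (t u : M -> R) (r : R) : in_dist_set d A t u r ->
  forall x, In x A -> u x <= t x + r /\ r <= t x + u x.
Proof.
  destruct Hd as [_ [Hsym Htri]].
  intros [y [z [[_ Hy] [[_ Hz] <-]]]] x Hx.
  rewrite <- (Hy x Hx), <- (Hz x Hx).
  pose proof (Htri z y x I I I). pose proof (Htri y x z I I I).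
  rewrite (Hsym z y), (Hsym x z) in * by exact I. split; lra.
Qed.

Lemma orb_katetov (t : M -> R) (y : M) : katetov D d A t ->
  (forall x, In x A -> d y x = t x) -> orb d A t y.
Proof.
  intros [Hval _] Hy. split; [| exact Hy].
  intro HyA. apply (proj2 (Hval y HyA)).
  rewrite <- (Hy y HyA). apply (proj1 Hd); auto.
Qed.

Variables (s : nat) (t : nat -> M -> R) (d'' : nat -> nat -> R).
Hypotheses (Ht : forall i, (i < s)%nat -> katetov D d A (t i))
  (Hd'' : is_metric (fun i => (i < s)%nat) d'')
  (Hdd : forall i j, (i < s)%nat -> (j < s)%nat ->
           in_dist_set d A (t i) (t j) (d'' i j)).

Lemma dprime_metric : is_metric (in_dom A (fun i => (i < s)%nat)) (dprime d d'' t).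
Proof.
  destruct Hd as [Hd0 [Hdsym _]]; destruct Hd'' as [H0 [Hsym Htri]].
  assert (Kt := fun i Hi => katetov_bounds (t i) (Ht i Hi)).
  assert (Kd := fun i j Hi Hj => dist_set_bounds (t i) (t j) _ (Hdd i j Hi Hj)).
  split; [|split].
  - intros [x|i] [y|j] Hp Hq; simpl in *.
    + rewrite Hd0 by exact I. split; congruence.
    + destruct (proj1 (Ht j Hq) x Hp). split; [tauto | discriminate].
    + destruct (proj1 (Ht i Hp) y Hq). split; [tauto | discriminate].
    + rewrite H0 by assumption. split; congruence.
  - intros [x|i] [y|j] Hp Hq; simpl in *; auto.
  - intros [x|i] [y|j] [z|k] Hp Hq Hr; simpl in *; try apply (proj2 (proj2 Hd)); auto.
    + destruct (Kt k Hr x y Hp Hq); lra.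
    + destruct (Kt j Hq x z Hp Hr); lra.
    + destruct (Kd j k Hq Hr x Hp); lra.
    + destruct (Kt i Hp z y Hr Hq); rewrite (Hdsym z y) in * by exact I; lra.
    + destruct (Kd i k Hp Hr y Hq); lra.
    + destruct (Kd j i Hq Hp z Hr); rewrite (Hsym i j) by assumption; lra.
Qed.

Lemma dprime_values (Hds : distance_set_is d D) :
  forall p q, in_dom A (fun i => (i < s)%nat) p -> in_dom A (fun i => (i < s)%nat) q ->
    In (dprime d d'' t p q) D.
Proof.
  assert (HdD : forall x y, In (d x y) D) by (intros x y; apply Hds; eauto).
  intros [x|i] [y|j] Hp Hq; simpl in *.
  - apply HdD.
  - apply (proj1 (Ht j Hq) x Hp).
  - apply (proj1 (Ht i Hp) y Hq).
  - destruct (Hdd i j Hp Hq) as [u [v [_ [_ <-]]]]. apply HdD.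
Qed.

End KatetovExtension.

Theorem lemma4p2 (D : list R) (HD0 : In 0 D) (HDnn : forall r, In r D -> 0 <= r)
  (Huniv : universal D)
  (M : Type) (d : M -> M -> R) (HM : in_UD D M d)
  (A : list M) (s : nat) (t : nat -> M -> R)
  (Ht : forall i, (i < s)%nat -> katetov D d A (t i))
  (d'' : nat -> nat -> R) (Hd'' : is_metric (fun i => (i < s)%nat) d'')
  (Hdd : forall i j, (i < s)%nat -> (j < s)%nat -> in_dist_set d A (t i) (t j) (d'' i j)) :
  is_metric (in_dom A (fun i => (i < s)%nat)) (dprime d d'' t) /\
  (forall (C : nat -> Prop), (forall i, C i -> (i < s)%nat) ->
   forall beta : M + nat -> M,
     (forall p q, in_dom A C p -> in_dom A C q ->
        d (beta p) (beta q) = dprime d d'' t p q) ->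
     (forall x, In x A -> beta (inl x) = x) ->
     exists alpha : M + nat -> M,
       (forall p q, in_dom A (fun i => (i < s)%nat) p ->
          in_dom A (fun i => (i < s)%nat) q ->
          d (alpha p) (alpha q) = dprime d d'' t p q) /\
       (forall p, in_dom A C p -> alpha p = beta p) /\
       (forall i, (i < s)%nat -> orb d A (t i) (alpha (inr i)))).
Proof.
  destruct HM as [Hd [_ [Hhom [Hds Hemb]]]].
  pose proof (dprime_metric D M d A Hd s t d'' Ht Hd'' Hdd) as Hmetric.
  split; [exact Hmetric |].
  intros C HC beta Hbeta HbA.
  destruct (listing_bounded (fun i => (i < s)%nat) s (fun i Hi => Hi)) as [ls Hls].
  destruct (listing_bounded C s HC) as [lC HlC].
  destruct (embeds_listed d D Hemb _ _ (in_dom_listing A _ ls Hls) _ Hmetric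
              (dprime_values D M d A s t d'' Ht Hdd Hds)) as [E HE].
  destruct (homogeneous_extension M d Hd Hhom _ (in_dom A C) _
              (in_dom_listing A C lC HlC) (in_dom_mono A C _ HC)
              _ Hmetric E HE beta Hbeta) as [alpha [Halpha Hext]].
  exists alpha; split; [exact Halpha | split; [exact Hext |]].
  intros i Hi. apply (orb_katetov D M d A Hd); [exact (Ht i Hi) |].
  intros x Hx. transitivity (d (alpha (inr i)) (alpha (inl x))).
  - rewrite (Hext (inl x)), HbA by assumption; reflexivity.
  - apply Halpha; assumption.
Qed.
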